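(* Let $\mathcal{X}$ and $\mathcal{Y}$ be finite sets, let $\mathcal{M}\subseteq\mathcal{X}\times\mathcal{Y}$ be the set of actual matches, and let $\hat{\mathcal{M}}_H\subseteq\mathcal{X}\times\mathcal{Y}$ be a fixed set (the matches identified by a holdout query algorithm, chosen independently of the validation sample). For $x\in\mathcal{X}$ let $\mathcal{M}(x)$ and $\hat{\mathcal{M}}_H(x)$ be the sets of pairs in $\mathcal{M}$, respectively $\hat{\mathcal{M}}_H$, whose first coordinate is $x$. Let $\hat{\mathcal{X}}_H=\{x\in\mathcal{X}:\hat{\mathcal{M}}_H(x)\ne\emptyset\}$ and $\mathcal{X}'=\{x\in\mathcal{X}:\mathcal{M}(x)\neq\emptyset\}$; define $p_H(x)=|\hat{\mathcal{M}}_H(x)\cap\mathcal{M}(x)|/|\hat{\mathcal{M}}_H(x)|$ for $x\in\hat{\mathcal{X}}_H$ and $r_H(x)=|\hat{\mathcal{M}}_H(x)\cap\mathcal{M}(x)|/|\mathcal{M}(x)|$ for $x\in\mathcal{X}'$, and the query precision and recall $P_H=\frac{1}{|\hat{\mathcal{X}}_H|}\sum_{x\in\hat{\mathcal{X}}_H}p_H(x)$, $R_H=\frac{1}{|\mathcal{X}'|}\sum_{x\in\mathcal{X}'}r_H(x)$. Let $\mathcal{S}_{\mathcal{X}}$ be a sample drawn uniformly at random without replacement from $\mathcal{X}$. Then for any $\delta>0$, with probability at least $1-\delta$, $$P_H\ \ge\ p^-(\hat{\mathcal{X}}_H,\mathcal{S}_{\mathcal{X}}\cap\hat{\mathcal{X}}_H,p_H,0,1,\delta),$$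 and, with probability at least $1-\delta$, $$R_H\ \ge\ p^-(\mathcal{X}',\mathcal{S}_{\mathcal{X}}\cap\mathcal{X}',r_H,0,1,\delta).$$
   Context: PAC bound rules: $p^+$ and $p^-$ are functions which, given a finite set $\mathcal{P}$ (population), a subset $\mathcal{S}\subseteq\mathcal{P}$, a function $f:\mathcal{P}\to\mathbb{R}$, reals $a\le b$ and $\delta>0$, return a real number, and satisfy the following: for every finite set $\mathcal{P}$ with $|\mathcal{P}|=n$, every sample size $s$, and every $f$ with $a\le f(x)\le b$ for all $x\in\mathcal{P}$, if $\mathcal{S}$ is a size-$s$ sample drawn uniformly at random without replacement from $\mathcal{P}$ and $\mu=\frac1n\sum_{x\in\mathcal{P}}f(x)$, then $\Pr\{\mu>p^+(\mathcal{P},\mathcal{S},f,a,b,\delta)\}\le\delta$ and $\Pr\{\mu<p^-(\mathcal{P},\mathcal{S},f,a,b,\delta)\}\le\delta$. *)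

From mathcomp Require Import all_boot all_order all_algebra.
Set Implicit Arguments. Unset Strict Implicit. Unset Printing Implicit Defensive.
Import Order.TTheory GRing.Theory Num.Theory.
Local Open Scope ring_scope.

(* Probability that a size-s sample S, drawn uniformly at random without
   replacement from the finite population P (i.e. uniformly among the
   s-element subsets of P), satisfies the event E. *)
Definition prob_sample (R : realFieldType) (T : finType) (P : {set T}) (s : nat)
  (E : {set T} -> bool) : R :=
  (#|[set S : {set T} | [&& S \subset P, #|S| == s & E S]]|%:R)
    / ('C(#|P|, s))%:R.

Definition mean (R : realFieldType) (T : finType) (P : {set T}) (f : T -> R) : R :=
  (#|P|%:R)^-1 * \sum_(x in P) f x.

(* a bound rule: (P, S, f, a, b, delta) |-> real; populations are finite sets
   (subsets of an arbitrary finite type) *)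
Definition bound_rule (R : realFieldType) :=
  forall T : finType, {set T} -> {set T} -> (T -> R) -> R -> R -> R -> R.

Definition pac_upper (R : realFieldType) (pp : bound_rule R) : Prop :=
  forall (T : finType) (P : {set T}) (s : nat) (f : T -> R) (a b delta : R),
    a <= b -> 0 < delta -> (s <= #|P|)%N ->
    (forall x, x \in P -> a <= f x <= b) ->
    prob_sample R P s (fun S => pp T P S f a b delta < mean P f) <= delta.

Definition pac_lower (R : realFieldType) (pm : bound_rule R) : Prop :=
  forall (T : finType) (P : {set T}) (s : nat) (f : T -> R) (a b delta : R),
    a <= b -> 0 < delta -> (s <= #|P|)%N ->
    (forall x, x \in P -> a <= f x <= b) ->
    prob_sample R P s (fun S => mean P f < pm T P S f a b delta) <= delta.

Definition pac_bound_rules (R : realFieldType) (pp pm : bound_rule R) : Prop :=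
  pac_upper pp /\ pac_lower pm.

Definition row_of (X Y : finType) (M : {set X * Y}) (x : X) : {set X * Y} :=
  [set e in M | e.1 == x].

Definition match_dom (X Y : finType) (M : {set X * Y}) : {set X} :=
  [set x | row_of M x != set0].

Definition prec_x (R : realFieldType) (X Y : finType) (M MH : {set X * Y}) (x : X) : R :=
  (#|row_of MH x :&: row_of M x|%:R) / (#|row_of MH x|%:R).

Definition rec_x (R : realFieldType) (X Y : finType) (M MH : {set X * Y}) (x : X) : R :=
  (#|row_of MH x :&: row_of M x|%:R) / (#|row_of M x|%:R).

Definition query_precision (R : realFieldType) (X Y : finType) (M MH : {set X * Y}) : R :=
  mean (match_dom MH) (prec_x R M MH).
Definition query_recall (R : realFieldType) (X Y : finType) (M MH : {set X * Y}) : R :=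
  mean (match_dom M) (rec_x R M MH).
Arguments prob_sample R [T] P s E.
Arguments mean [R T] P f.

(* A sample S drawn from X meets a subpopulation P in a sample S :&: P whose
   size k is random, but which, conditioned on k, is a uniform k-subset of P:
   every k-subset A of P extends in exactly 'C(#|~: P|, s - k) ways to an
   s-subset S of X with S :&: P = A.  Hence the probability that the PAC lower
   rule fails on S :&: P is an average of failure probabilities on uniform
   k-samples of P, each of which is at most delta. *)

From mathcomp Require Import all_boot all_order all_algebra.
Import Order.TTheory GRing.Theory Num.Theory.

Set Implicit Arguments.
Unset Strict Implicit.
Unset Printing Implicit Defensive.

Section RestrictedDraws.

Variables (T : finType) (P : {set T}).

Lemma setIUD_subset [A B : {set T}] : A \subset P -> B \subset ~: P ->
  (A :|: B) :&: P = A /\ (A :|: B) :\: P = B.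
Proof.
move=> sAP sBCP; rewrite setDUl setIUl.
have -> : A :&: P = A by apply/setIidPl.
have -> : B :\: P = B by apply/setDidPl; rewrite disjoints_subset.
have -> : B :&: P = set0 by apply/disjoint_setI0; rewrite disjoints_subset.
have -> : A :\: P = set0 by apply/eqP; rewrite setD_eq0.
by rewrite setU0 set0U.
Qed.

Lemma card_draws_restrict_eq (s k : nat) (E : {set T} -> bool) : (k <= s)%N ->
  #|[set S : {set T} | [&& #|S| == s, #|S :&: P| == k & E (S :&: P)]]| =
  (#|[set A : {set T} | [&& A \subset P, #|A| == k & E A]]|
     * 'C(#|~: P|, s - k))%N.
Proof.
move=> le_ks; rewrite -cards_draws -cardsX.
pose split_P (S : {set T}) := (S :&: P, S :\: P).
have inj_split : injective split_P.
  by move=> S S' [eI eD]; rewrite -(setID S P) -(setID S' P) eI eD.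
rewrite -(card_imset _ inj_split); apply: eq_card => -[A B].
rewrite !inE /=; apply/imsetP/idP.
- case=> S; rewrite inE => /and3P[/eqP cardS /eqP cardSP ES] [-> ->].
  rewrite subsetIr subsetDr cardSP ES eqxx /=.
  by rewrite -cardSP -cardS -(cardsID P S) addKn.
- case/andP=> /and3P[sAP /eqP cardA EA] /andP[sBCP /eqP cardB].
  have [eI eD] := setIUD_subset sAP sBCP.
  have disjAB : [disjoint A & B].
    by rewrite disjoints_subset; apply: subset_trans sAP _; rewrite subsetC.
  exists (A :|: B); last by rewrite /split_P eI eD.
  by rewrite inE eI cardsU (disjoint_setI0 disjAB) cards0 subn0 cardA cardB
    subnKC // !eqxx EA.
Qed.

Lemma card_draws_restrict (s : nat) (E : {set T} -> bool) :
  #|[set S : {set T} | #|S| == s & E (S :&: P)]| =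
  (\sum_(k < s.+1) #|[set A : {set T} | [&& A \subset P, #|A| == k & E A]]|
     * 'C(#|~: P|, s - k))%N.
Proof.
rewrite -sum1_card.
rewrite (partition_big (fun S => inord #|S :&: P| : 'I_s.+1) xpredT) //=.
apply: eq_bigr => k _; rewrite -card_draws_restrict_eq; last by rewrite -ltnS.
rewrite -sum1_card; apply: eq_bigl => S; rewrite !inE.
case cardS: (#|S| == s) => //=.
have lt_SP_s : (#|S :&: P| < s.+1)%N.
  by rewrite ltnS -(eqP cardS) subset_leq_card ?subsetIl.
by rewrite -val_eqE /= inordK // andbC.
Qed.

Lemma sum_bin_restrict (s : nat) :
  (\sum_(k < s.+1) 'C(#|P|, k) * 'C(#|~: P|, s - k))%N = 'C(#|T|, s).
Proof.
rewrite -cardsT -cards_draws.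
have -> : [set S : {set T} | S \subset [set: T] & #|S| == s] =
          [set S : {set T} | #|S| == s & true].
  by apply/setP => S; rewrite !inE subsetT andbT.
rewrite (card_draws_restrict s (fun _ => true)).
apply: eq_bigr => k _; rewrite -cards_draws.
by congr (_ * _)%N; apply: eq_card => A; rewrite !inE andbT.
Qed.

End RestrictedDraws.

Local Open Scope ring_scope.

Section SampleProbability.

Variables (R : realFieldType) (T : finType).

Lemma eq_prob_sample (P : {set T}) (s : nat) (E1 E2 : {set T} -> bool) :
  E1 =1 E2 -> prob_sample R P s E1 = prob_sample R P s E2.
Proof.
by move=> eE; congr (_%:R / _); apply: eq_card => S; rewrite !inE eE.
Qed.

Lemma prob_sample_ge0 (P : {set T}) (s : nat) (E : {set T} -> bool) :
  0 <= prob_sample R P s E.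
Proof. by rewrite divr_ge0 ?ler0n. Qed.

Lemma prob_sampleC (P : {set T}) (s : nat) (E : {set T} -> bool) :
  (s <= #|P|)%N ->
  prob_sample R P s (fun S => ~~ E S) = 1 - prob_sample R P s E.
Proof.
move=> le_sP; rewrite /prob_sample.
have binP : 'C(#|P|, s)%:R != 0 :> R by rewrite pnatr_eq0 -lt0n bin_gt0.
have split_bin : 'C(#|P|, s) =
    (#|[set S : {set T} | [&& S \subset P, #|S| == s & ~~ E S]]|
     + #|[set S : {set T} | [&& S \subset P, #|S| == s & E S]]|)%N.
  rewrite -cards_draws -(cardsID [set S : {set T} | ~~ E S]).
  by congr (_ + _)%N; apply: eq_card => S; rewrite !inE;
    case: (E S); rewrite ?andbT ?andbF.
by apply/eqP; rewrite eq_sym subr_eq -mulrDl -natrD -split_bin divff.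
Qed.

Lemma prob_sample_restrict_le (P : {set T}) (s : nat) (E : {set T} -> bool)
    (delta : R) :
  (forall k, (k <= #|P|)%N -> prob_sample R P k E <= delta) ->
  prob_sample R [set: T] s (fun S => E (S :&: P)) <= delta.
Proof.
move=> le_delta.
have delta_ge0 : 0 <= delta.
  exact: le_trans (prob_sample_ge0 _ _ _) (le_delta 0%N (leq0n _)).
have draws_le k : #|[set A : {set T} | [&& A \subset P, #|A| == k & E A]]|%:R
                    <= delta * 'C(#|P|, k)%:R :> R.
  have [le_kP | lt_Pk] := leqP k #|P|.
    by rewrite -ler_pdivrMr ?ltr0n ?bin_gt0 // le_delta.
  have : (#|[set A : {set T} | [&& A \subset P, #|A| == k & E A]]|
            <= 'C(#|P|, k))%N.
    rewrite -cards_draws; apply/subset_leq_card/subsetP => A.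
    by rewrite !inE => /and3P[-> ->].
  by rewrite bin_small // leqn0 => /eqP ->; rewrite mulr0.
have bad_le : #|[set S : {set T} | #|S| == s & E (S :&: P)]|%:R
                <= delta * 'C(#|T|, s)%:R :> R.
  rewrite card_draws_restrict -(sum_bin_restrict P) !natr_sum mulr_sumr.
  apply: ler_sum => k _; rewrite !natrM mulrA.
  by apply: ler_wpM2r; [exact: ler0n | exact: draws_le].
rewrite /prob_sample cardsT.
have -> : [set S : {set T} | [&& S \subset [set: T], #|S| == s & E (S :&: P)]]
          = [set S : {set T} | #|S| == s & E (S :&: P)].
  by apply/setP => S; rewrite !inE subsetT.
have [-> | binT_neq0] := eqVneq 'C(#|T|, s) 0%N; first by rewrite invr0 mulr0.
by rewrite ler_pdivrMr // ltr0n lt0n.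
Qed.

Lemma prob_sample_restrict_ge (P : {set T}) (s : nat) (E : {set T} -> bool)
    (delta : R) :
  (s <= #|T|)%N ->
  (forall k, (k <= #|P|)%N -> prob_sample R P k E <= delta) ->
  1 - delta <= prob_sample R [set: T] s (fun S => ~~ E (S :&: P)).
Proof.
move=> le_sT le_delta; rewrite prob_sampleC ?cardsT // lerD2l lerN2.
exact: prob_sample_restrict_le.
Qed.

End SampleProbability.

Lemma pac_lower_restrict (R : realFieldType) (pm : bound_rule R) (T : finType)
    (P : {set T}) (f : T -> R) (s : nat) (delta : R) :
  pac_lower pm -> (s <= #|T|)%N -> 0 < delta ->
  (forall x, x \in P -> 0 <= f x <= 1) ->
  1 - delta <= prob_sample R [set: T] s (fun S =>
    pm T P (S :&: P) f 0 1 delta <= mean P f).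
Proof.
move=> pm_lower le_sT delta_gt0 f01.
pose fails A := mean P f < pm T P A f 0 1 delta.
rewrite (eq_prob_sample _ _ _ (E2 := fun S => ~~ fails (S :&: P))) => [|S].
  by apply: prob_sample_restrict_ge => // k le_kP; apply: pm_lower.
by rewrite leNgt.
Qed.

Lemma natr_div_in01 (R : realFieldType) (m n : nat) : (m <= n)%N ->
  0 <= (m%:R / n%:R : R) <= 1.
Proof.
move=> le_mn; rewrite divr_ge0 ?ler0n //=.
have [-> | n_gt0] := posnP n; first by rewrite invr0 mulr0.
by rewrite ler_pdivrMr ?ltr0n // mul1r ler_nat.
Qed.

Theorem theorem4 (R : realFieldType) (pp pm : bound_rule R)
  (X Y : finType) (M MH : {set X * Y}) (s : nat) (delta : R) :
  pac_bound_rules pp pm ->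
  (s <= #|X|)%N -> 0 < delta ->
  1 - delta <= prob_sample R [set: X] s (fun S =>
      pm X (match_dom MH) (S :&: match_dom MH) (prec_x R M MH) 0 1 delta
        <= query_precision R M MH)
  /\
  1 - delta <= prob_sample R [set: X] s (fun S =>
      pm X (match_dom M) (S :&: match_dom M) (rec_x R M MH) 0 1 delta
        <= query_recall R M MH).
Proof.
move=> [_ pm_lower] le_sX delta_gt0.
split; apply: pac_lower_restrict => // x _; apply/natr_div_in01/subset_leq_card.
- exact: subsetIl.
- exact: subsetIr.
Qed.
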